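(* Let $d\geq 2$ be an integer, let $\mathbf{k}=(k^1,\dots,k^d)\in\mathbb{R}^d$ with $\mathbf{k}\neq 0$, and write $k_i=k^i$, $k^2=\delta_{ij}k^ik^j$ (repeated indices summed over $1,\dots,d$). Let $\varphi_{ij}(z)$, $i,j=1,\dots,d$, be twice differentiable complex-valued functions of $z\in(0,\infty)$ with $\varphi_{ij}=\varphi_{ji}$, and set $\varphi_0=\delta^{ij}\varphi_{ij}$. Define the differential operator $$\hat E_s=\partial_z^2+\frac{5-d}{z}\partial_z+\frac{4-2d}{z^2}-k^2,$$ and suppose that for all $i,j$ $$\hat E_s\varphi_{ij}= -k_jk^m\varphi_{im}-k_ik^m\varphi_{mj}+k_ik_j\varphi_0 .$$ Define $$\bar\varphi_{ij}=\varphi_{ij}-\frac{k_ik^m}{k^2}\varphi_{mj}-\frac{k_jk^m}{k^2}\varphi_{mi}+\frac{k_ik_jk^mk^n}{k^4}\varphi_{mn}-\frac{1}{d-1}\Big(\delta_{ij}-\frac{k_ik_j}{k^2}\Big)\Big(\varphi_0-\frac{k^mk^n}{k^2}\varphi_{mn}\Big).$$ Then $\bar\varphi_{ij}$ is traceless and transverse, i.e. $\delta^{ij}\bar\varphi_{ij}=0$ and $k^i\bar\varphi_{ij}=0$, and it satisfies the homogeneous equation $\hat E_s\bar\varphi_{ij}(z)=0$ for all $i,j$.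
   Context: This is the momentum-space (Fourier transformed in the boundary coordinates $x^i$, with $\partial_m\to ik_m$) form of the equation for the symmetric component $\varphi_{ij}$ of a hook-type gauge field in Euclidean $AdS_{d+1}$ in Poincaré coordinates, $z$ being the radial coordinate; indices are raised and lowered with the Euclidean metric $\delta_{ij}$, and $\mathbf{k}$ is held fixed. *)

From Stdlib Require Import Reals.
From Coquelicot Require Import Coquelicot.

Open Scope R_scope.

(* Sum over an index m = 0, ..., d-1 (indices 1..d of the paper shifted by one). *)
Definition sumR (d : nat) (f : nat -> R) : R := sum_n f (pred d).
Definition sumC (d : nat) (f : nat -> C) : C := sum_n f (pred d).

Definition ksq (d : nat) (k : nat -> R) : R := sumR d (fun i => k i * k i).

Definition trC (d : nat) (phi : nat -> nat -> R -> C) (z : R) : C :=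
  sumC d (fun m => phi m m z).

Definition kkphi (d : nat) (k : nat -> R) (phi : nat -> nat -> R -> C) (z : R) : C :=
  sumC d (fun m => sumC d (fun n => (RtoC (k m * k n) * phi m n z)%C)).

(* The operator  E_s f = f'' + (5-d)/z f' + ((4-2d)/z^2 - k^2) f,
   given the first derivative f1 and second derivative f2 of f. *)
Definition Es (d : nat) (k : nat -> R) (f f1 f2 : R -> C) (z : R) : C :=
  (f2 z + RtoC ((5 - INR d) / z) * f1 z
   + RtoC ((4 - 2 * INR d) / (z * z) - ksq d k) * f z)%C.

Definition kron (i j : nat) : R := if Nat.eqb i j then 1 else 0.

Definition phibar (d : nat) (k : nat -> R) (phi : nat -> nat -> R -> C)
  (i j : nat) (z : R) : C :=
  let k2 := ksq d k in
  (phi i j z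
   - sumC d (fun m => RtoC (k i * k m / k2) * phi m j z)
   - sumC d (fun m => RtoC (k j * k m / k2) * phi m i z)
   + RtoC (k i * k j / (k2 * k2)) * kkphi d k phi z
   - RtoC (1 / (INR d - 1) * (kron i j - k i * k j / k2))
       * (trC d phi z - RtoC (1 / k2) * kkphi d k phi z))%C.

(* The map F |-> phibar is a constant-coefficient linear projector [ttproj]
   on matrices (k <> 0, d >= 2).  A direct computation shows that its image
   is traceless and transverse, and that it annihilates every pure gauge mode
   k_i v_j + v_i k_j.  Since E_s acts entrywise with scalar coefficients, it
   commutes with [ttproj]; by the symmetry of phi the source term of the
   equation of motion is the gauge mode with v_i = k_i phi_0 / 2 - k^m phi_mi,
   so E_s phibar = ttproj (E_s phi) = 0. *)

From Stdlib Require Import Reals Lia Lra.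
From Coquelicot Require Import Coquelicot.
Open Scope R_scope.

Lemma RtoC_neq0 (x : R) : x <> 0 -> RtoC x <> 0%C.
Proof. intros Hx E; apply Hx, RtoC_inj, E. Qed.

Lemma INR_sub1_neq0 (d : nat) : (2 <= d)%nat -> INR d - 1 <> 0.
Proof. intros Hd. apply (lt_INR 1) in Hd; simpl in Hd; lra. Qed.

Lemma sumC_ext d (f g : nat -> C) : (forall m, f m = g m) -> sumC d f = sumC d g.
Proof. intros H; apply sum_n_ext, H. Qed.

(* [0 < d] is needed: [sumC 0 f] is [f 0], not an empty sum. *)
Lemma sumC_ext_lt d (f g : nat -> C) :
  (0 < d)%nat -> (forall m, (m < d)%nat -> f m = g m) -> sumC d f = sumC d g.
Proof. intros Hd H; apply sum_n_ext_loc; intros m Hm; apply H; lia. Qed.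

Lemma sumC_plus d (f g : nat -> C) :
  sumC d (fun m => f m + g m)%C = (sumC d f + sumC d g)%C.
Proof. exact (sum_n_plus f g _). Qed.

Lemma sumC_scal d (c : C) (f : nat -> C) :
  sumC d (fun m => c * f m)%C = (c * sumC d f)%C.
Proof. exact (@sum_n_mult_l C_Ring c f _). Qed.

Lemma sumC_switch d (u : nat -> nat -> C) :
  sumC d (fun m => sumC d (u m)) = sumC d (fun n => sumC d (fun m => u m n)).
Proof. apply sum_n_switch. Qed.

Lemma RtoC_sumR d (f : nat -> R) : RtoC (sumR d f) = sumC d (fun m => RtoC (f m)).
Proof.
unfold sumR, sumC; induction (pred d) as [|N IH].
- now rewrite !sum_O.
- now rewrite !sum_Sn, <- IH, <- RtoC_plus.
Qed.

Lemma sum_n_kron (f : nat -> R) j N :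
  sum_n (fun m => f m * kron m j) N = if (j <=? N)%nat then f j else 0.
Proof.
induction N as [|N IH]; unfold kron in *.
- rewrite sum_O; destruct j; simpl; ring.
- rewrite sum_Sn, IH; change plus with Rplus.
  destruct (Nat.eqb_spec (S N) j) as [<-|Hne].
  + destruct (Nat.leb_spec (S N) N), (Nat.leb_spec (S N) (S N)); try lia; lra.
  + destruct (Nat.leb_spec j N), (Nat.leb_spec j (S N)); try lia; lra.
Qed.

Lemma sumR_kron d (f : nat -> R) j :
  (j < d)%nat -> sumR d (fun m => f m * kron m j) = f j.
Proof.
intros Hj; unfold sumR; rewrite sum_n_kron.
now rewrite (proj2 (Nat.leb_le _ _)) by lia.
Qed.

Lemma sumR_kron_diag d : (0 < d)%nat -> sumR d (fun m => kron m m) = INR d.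
Proof.
intros Hd; unfold sumR.
rewrite (sum_n_ext _ (fun _ => 1)) by (intro; unfold kron; now rewrite Nat.eqb_refl).
rewrite sum_n_const, Nat.succ_pred_pos by exact Hd; ring.
Qed.

Lemma sum_n_nonneg_ge (f : nat -> R) N i :
  (forall m, 0 <= f m) -> (i <= N)%nat -> f i <= sum_n f N.
Proof.
intros Hf Hi; induction N as [|N IH].
- replace i with 0%nat by lia; rewrite sum_O; lra.
- rewrite sum_Sn; change plus with Rplus.
  assert (Hsum : 0 <= sum_n f N).
  { apply Rle_trans with (sum_n_m (fun _ => 0) 0 N).
    - rewrite sum_n_m_const; lra.
    - apply sum_n_m_le, Hf. }
  destruct (Nat.eq_dec i (S N)) as [->|Hne].
  + lra.
  + specialize (IH ltac:(lia)); specialize (Hf (S N)); lra.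
Qed.

Lemma ksq_neq0 d k : (exists i, (i < d)%nat /\ k i <> 0) -> ksq d k <> 0.
Proof.
intros [i [Hi Hki]].
assert (Hle : k i * k i <= ksq d k).
{ apply (sum_n_nonneg_ge (fun m => k m * k m)); [intros; nra | lia]. }
assert (0 < k i * k i) by nra; lra.
Qed.

Section Projector.
Variables (d : nat) (k : nat -> R).

Definition kdot (v : nat -> C) : C := sumC d (fun m => RtoC (k m) * v m)%C.
Definition mtrace (F : nat -> nat -> C) : C := sumC d (fun m => F m m).
Definition kkdot (F : nat -> nat -> C) : C := kdot (fun m => kdot (F m)).

Definition ttproj (F : nat -> nat -> C) (i j : nat) : C :=
  let K := RtoC (ksq d k) in
  (F i j - RtoC (k i) / K * kdot (fun m => F m j) - RtoC (k j) / K * kdot (fun m => F m i)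
   + RtoC (k i) * RtoC (k j) / (K * K) * kkdot F
   - (RtoC (kron i j) - RtoC (k i) * RtoC (k j) / K) / (RtoC (INR d) - 1)
       * (mtrace F - kkdot F / K))%C.

Definition gauge_mode (v : nat -> C) (a b : nat) : C := (RtoC (k a) * v b + v a * RtoC (k b))%C.

Lemma kdot_ext (u v : nat -> C) : (forall m, u m = v m) -> kdot u = kdot v.
Proof. intros H; apply sumC_ext; intro m; now rewrite H. Qed.

Lemma kdotD (u v : nat -> C) : kdot (fun m => u m + v m)%C = (kdot u + kdot v)%C.
Proof.
unfold kdot; rewrite <- sumC_plus; apply sumC_ext; intro m; ring.
Qed.

Lemma kdotZ (c : C) (u : nat -> C) : kdot (fun m => c * u m)%C = (c * kdot u)%C.
Proof.
unfold kdot; rewrite <- sumC_scal; apply sumC_ext; intro m; ring.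
Qed.

Lemma kdot_k : kdot (fun m => RtoC (k m)) = RtoC (ksq d k).
Proof.
unfold ksq; rewrite RtoC_sumR; apply sumC_ext; intro m; now rewrite RtoC_mult.
Qed.

Lemma kdot_kron j : (j < d)%nat -> kdot (fun m => RtoC (kron m j)) = RtoC (k j).
Proof.
intros Hj; rewrite <- (sumR_kron d k j Hj), RtoC_sumR.
apply sumC_ext; intro m; now rewrite RtoC_mult.
Qed.

Lemma mtrace_kron : (0 < d)%nat -> mtrace (fun a b => RtoC (kron a b)) = RtoC (INR d).
Proof. intros Hd; now rewrite <- sumR_kron_diag, RtoC_sumR. Qed.

Lemma kdot_cols (F : nat -> nat -> C) : kdot (fun j => kdot (fun m => F m j)) = kkdot F.
Proof.
unfold kkdot, kdot.
transitivity (sumC d (fun j => sumC d (fun m => RtoC (k j) * (RtoC (k m) * F m j))))%C.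
{ apply sumC_ext; intro j; now rewrite sumC_scal. }
rewrite sumC_switch; apply sumC_ext; intro m.
rewrite <- sumC_scal; apply sumC_ext; intro n; ring.
Qed.

Lemma mtraceD (F G : nat -> nat -> C) :
  mtrace (fun a b => F a b + G a b)%C = (mtrace F + mtrace G)%C.
Proof. apply sumC_plus. Qed.

Lemma mtraceZ (c : C) (F : nat -> nat -> C) :
  mtrace (fun a b => c * F a b)%C = (c * mtrace F)%C.
Proof. apply sumC_scal. Qed.

Lemma kkdotD (F G : nat -> nat -> C) :
  kkdot (fun a b => F a b + G a b)%C = (kkdot F + kkdot G)%C.
Proof. unfold kkdot; rewrite <- kdotD; apply kdot_ext; intro m; apply kdotD. Qed.

Lemma kkdotZ (c : C) (F : nat -> nat -> C) :
  kkdot (fun a b => c * F a b)%C = (c * kkdot F)%C.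
Proof. unfold kkdot; rewrite <- kdotZ; apply kdot_ext; intro m; apply kdotZ. Qed.

Lemma ttprojD (F G : nat -> nat -> C) i j :
  ttproj (fun a b => F a b + G a b)%C i j = (ttproj F i j + ttproj G i j)%C.
Proof. unfold ttproj; cbv zeta; rewrite !kdotD, mtraceD, kkdotD; unfold Cdiv; ring. Qed.

Lemma ttprojZ (c : C) (F : nat -> nat -> C) i j :
  ttproj (fun a b => c * F a b)%C i j = (c * ttproj F i j)%C.
Proof. unfold ttproj; cbv zeta; rewrite !kdotZ, mtraceZ, kkdotZ; unfold Cdiv; ring. Qed.

Lemma ttproj_ext (F G : nat -> nat -> C) i j :
  (0 < d)%nat -> (i < d)%nat -> (j < d)%nat ->
  (forall a b, (a < d)%nat -> (b < d)%nat -> F a b = G a b) ->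
  ttproj F i j = ttproj G i j.
Proof.
intros Hd Hi Hj H.
assert (Hcol : forall b, (b < d)%nat -> kdot (fun m => F m b) = kdot (fun m => G m b)).
{ intros b Hb; apply sumC_ext_lt; auto; intros m Hm; now rewrite H. }
assert (Hkk : kkdot F = kkdot G).
{ apply sumC_ext_lt; auto; intros m Hm; f_equal.
  apply sumC_ext_lt; auto; intros n Hn; now rewrite H. }
assert (Htr : mtrace F = mtrace G) by (apply sumC_ext_lt; auto).
unfold ttproj; now rewrite (Hcol i), (Hcol j), Hkk, Htr, H.
Qed.

Hypothesis Hd : (2 <= d)%nat.
Hypothesis HK : ksq d k <> 0.

Let HKC : RtoC (ksq d k) <> 0%C.
Proof. now apply RtoC_neq0. Qed.

Let Hd1 : (RtoC (INR d) - 1)%C <> 0%C.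
Proof. rewrite <- RtoC_minus; now apply RtoC_neq0, INR_sub1_neq0. Qed.

Lemma mtrace_ttproj (F : nat -> nat -> C) : mtrace (ttproj F) = 0%C.
Proof.
set (K := RtoC (ksq d k)); set (D1 := (RtoC (INR d) - 1)%C).
set (X := (mtrace F - kkdot F / K)%C).
transitivity (sumC d (fun m => F m m
  + (-(2) / K) * (RtoC (k m) * kdot (fun n => F n m))
  + (kkdot F / (K * K) + X / (K * D1)) * (RtoC (k m) * RtoC (k m))
  + (- X / D1) * RtoC (kron m m)))%C.
{ apply sumC_ext; intro m; unfold ttproj; cbv zeta; fold K D1 X; field; auto. }
rewrite !sumC_plus, !sumC_scal.
change (sumC d (fun m => F m m)) with (mtrace F).
change (sumC d (fun m => RtoC (k m) * kdot (fun n => F n m)))%C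
  with (kdot (fun m => kdot (fun n => F n m))).
change (sumC d (fun m => RtoC (k m) * RtoC (k m)))%C with (kdot (fun m => RtoC (k m))).
change (sumC d (fun m => RtoC (kron m m))) with (mtrace (fun a b => RtoC (kron a b))).
rewrite kdot_cols, kdot_k, mtrace_kron by lia.
unfold X, K, D1; field; auto.
Qed.

Lemma kdot_ttproj (F : nat -> nat -> C) j : (j < d)%nat -> kdot (fun i => ttproj F i j) = 0%C.
Proof.
intros Hj.
set (K := RtoC (ksq d k)); set (D1 := (RtoC (INR d) - 1)%C).
set (X := (mtrace F - kkdot F / K)%C); set (Aj := kdot (fun m => F m j)).
transitivity (kdot (fun i => F i j
  + (- Aj / K + RtoC (k j) * kkdot F / (K * K) + RtoC (k j) * X / (K * D1)) * RtoC (k i)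
  + (- RtoC (k j) / K) * kdot (fun n => F n i)
  + (- X / D1) * RtoC (kron i j)))%C.
{ apply kdot_ext; intro i; unfold ttproj; cbv zeta; fold K D1 X Aj; field; auto. }
rewrite !kdotD, !kdotZ; fold Aj.
rewrite kdot_cols, kdot_k, kdot_kron by exact Hj.
unfold X, K, D1; field; auto.
Qed.

Lemma kdot_gauge_mode_col (v : nat -> C) j :
  kdot (fun m => gauge_mode v m j) = (RtoC (ksq d k) * v j + RtoC (k j) * kdot v)%C.
Proof.
unfold gauge_mode; rewrite (kdot_ext _ (fun m => v j * RtoC (k m) + RtoC (k j) * v m))%C.
- now rewrite kdotD, !kdotZ, kdot_k, Cmult_comm.
- intro m; ring.
Qed.

Lemma ttproj_gauge_mode (v : nat -> C) i j : ttproj (gauge_mode v) i j = 0%C.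
Proof.
assert (Htr : mtrace (gauge_mode v) = (2 * kdot v)%C).
{ unfold mtrace, gauge_mode, kdot; rewrite <- sumC_scal; apply sumC_ext; intro m; ring. }
assert (Hkk : kkdot (gauge_mode v) = (2 * RtoC (ksq d k) * kdot v)%C).
{ rewrite <- kdot_cols.
  rewrite (kdot_ext _ (fun b => RtoC (ksq d k) * v b + kdot v * RtoC (k b)))%C.
  - now rewrite kdotD, !kdotZ, kdot_k; ring.
  - intro b; rewrite kdot_gauge_mode_col; ring. }
unfold ttproj; cbv zeta; rewrite !kdot_gauge_mode_col, Htr, Hkk.
unfold gauge_mode; field; auto.
Qed.
End Projector.

Lemma phibar_ttproj d k (phi : nat -> nat -> R -> C) i j z :
  (2 <= d)%nat -> ksq d k <> 0 ->
  phibar d k phi i j z = ttproj d k (fun a b => phi a b z) i j.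
Proof.
intros Hd HK.
assert (HKC := RtoC_neq0 _ HK).
assert (Hd1 : INR d - 1 <> 0) by now apply INR_sub1_neq0.
assert (Hcol : forall a b, sumC d (fun m => RtoC (k a * k m / ksq d k) * phi m b z)%C
  = (RtoC (k a) / RtoC (ksq d k) * kdot d k (fun m => phi m b z))%C).
{ intros a b; unfold kdot; rewrite <- sumC_scal; apply sumC_ext; intro m.
  rewrite RtoC_div, RtoC_mult by exact HK; field; exact HKC. }
assert (Hkk : kkphi d k phi z = kkdot d k (fun a b => phi a b z)).
{ apply sumC_ext; intro m; unfold kdot; rewrite <- sumC_scal.
  apply sumC_ext; intro n; rewrite RtoC_mult; ring. }
unfold phibar, ttproj; cbv zeta; rewrite !Hcol, Hkk.
change (trC d phi z) with (mtrace d (fun a b => phi a b z)).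
rewrite !RtoC_mult, !RtoC_div, !RtoC_minus, !RtoC_div, !RtoC_mult by auto.
field; split; [exact HKC | rewrite <- RtoC_minus; now apply RtoC_neq0].
Qed.

Lemma is_derive_RtoC_scal (c : R) (f : R -> C) z l :
  is_derive (V := C_R_NormedModule) f z l ->
  is_derive (V := C_R_NormedModule) (fun x => RtoC c * f x)%C z (RtoC c * l)%C.
Proof.
intros Hf.
apply (is_derive_ext (fun x => scal c (f x))); [intro; apply scal_R_Cmult|].
rewrite <- scal_R_Cmult.
eapply filterdiff_ext_lin; [exact (filterdiff_scal_r_fct c f _ Rmult_comm Hf)|].
intro y; simpl; rewrite !scal_assoc; f_equal; apply Rmult_comm.
Qed.

Lemma is_derive_sumC d (f : nat -> R -> C) (f' : nat -> C) z :
  (0 < d)%nat -> (forall m, (m < d)%nat -> is_derive (V := C_R_NormedModule) (f m) z (f' m)) ->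
  is_derive (V := C_R_NormedModule) (fun x => sumC d (fun m => f m x)) z (sumC d f').
Proof.
intros Hd Hf; unfold sumC; apply (is_derive_sum_n (V := C_R_NormedModule)).
intros m Hm; apply Hf; lia.
Qed.

Lemma is_derive_sumC_RtoC_scal d (c : nat -> R) (g : nat -> R -> C) (g' : nat -> C) z :
  (0 < d)%nat -> (forall m, (m < d)%nat -> is_derive (V := C_R_NormedModule) (g m) z (g' m)) ->
  is_derive (V := C_R_NormedModule) (fun x => sumC d (fun m => RtoC (c m) * g m x))%C z
    (sumC d (fun m => RtoC (c m) * g' m))%C.
Proof.
intros Hd Hg; apply is_derive_sumC; [exact Hd|].
intros m Hm; now apply is_derive_RtoC_scal, Hg.
Qed.

Lemma is_derive_phibar d k (phi phi1 : nat -> nat -> R -> C) i j z :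
  (0 < d)%nat -> (i < d)%nat -> (j < d)%nat ->
  (forall a b, (a < d)%nat -> (b < d)%nat ->
     is_derive (V := C_R_NormedModule) (phi a b) z (phi1 a b z)) ->
  is_derive (V := C_R_NormedModule) (phibar d k phi i j) z (phibar d k phi1 i j z).
Proof.
intros Hd Hi Hj Hphi.
assert (Hkk : is_derive (V := C_R_NormedModule) (kkphi d k phi) z (kkphi d k phi1 z)).
{ apply is_derive_sumC; [exact Hd|]; intros m Hm.
  apply is_derive_sumC_RtoC_scal; auto. }
assert (Htr : is_derive (V := C_R_NormedModule) (trC d phi) z (trC d phi1 z)).
{ apply is_derive_sumC; auto. }
apply (is_derive_minus (V := C_R_NormedModule)); [|now apply is_derive_RtoC_scal,
  (is_derive_minus (V := C_R_NormedModule)), is_derive_RtoC_scal].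
apply (is_derive_plus (V := C_R_NormedModule)); [|now apply is_derive_RtoC_scal].
apply (is_derive_minus (V := C_R_NormedModule));
  [apply (is_derive_minus (V := C_R_NormedModule)); [now apply Hphi|]|];
  apply is_derive_sumC_RtoC_scal; auto.
Qed.

Lemma Es_phibar d k (phi phi1 phi2 : nat -> nat -> R -> C) i j z :
  (2 <= d)%nat -> ksq d k <> 0 ->
  Es d k (phibar d k phi i j) (phibar d k phi1 i j) (phibar d k phi2 i j) z
  = ttproj d k (fun a b => Es d k (phi a b) (phi1 a b) (phi2 a b) z) i j.
Proof.
intros Hd HK; unfold Es; rewrite !phibar_ttproj by assumption.
now rewrite !ttprojD, !ttprojZ.
Qed.

Lemma eom_source_gauge_mode d k (P : nat -> nat -> C) a b :
  (0 < d)%nat -> (a < d)%nat ->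
  (forall a b, (a < d)%nat -> (b < d)%nat -> P a b = P b a) ->
  (- RtoC (k b) * kdot d k (P a) - RtoC (k a) * kdot d k (fun m => P m b)
   + RtoC (k a * k b) * mtrace d P)%C
  = gauge_mode k (fun c => RtoC (k c) * mtrace d P / 2 - kdot d k (fun m => P m c))%C a b.
Proof.
intros Hd Ha Hsym.
assert (Hrow : kdot d k (P a) = kdot d k (fun m => P m a)).
{ apply sumC_ext_lt; [exact Hd|]; intros m Hm; now rewrite Hsym. }
rewrite Hrow; unfold gauge_mode; rewrite RtoC_mult; field.
Qed.

Theorem lemma1 (d : nat) (k : nat -> R)
  (phi phi1 phi2 : nat -> nat -> R -> C) :
  (2 <= d)%nat ->
  (exists i, (i < d)%nat /\ k i <> 0) ->
  (forall i j z, (i < d)%nat -> (j < d)%nat -> 0 < z ->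
     is_derive (V := C_R_NormedModule) (phi i j) z (phi1 i j z) /\
     is_derive (V := C_R_NormedModule) (phi1 i j) z (phi2 i j z)) ->
  (forall i j z, (i < d)%nat -> (j < d)%nat -> 0 < z -> phi i j z = phi j i z) ->
  (forall i j z, (i < d)%nat -> (j < d)%nat -> 0 < z ->
     Es d k (phi i j) (phi1 i j) (phi2 i j) z =
     (- RtoC (k j) * sumC d (fun m => RtoC (k m) * phi i m z)
      - RtoC (k i) * sumC d (fun m => RtoC (k m) * phi m j z)
      + RtoC (k i * k j) * trC d phi z)%C) ->
  (forall z, 0 < z -> trC d (phibar d k phi) z = 0%C) /\
  (forall j z, (j < d)%nat -> 0 < z ->
     sumC d (fun i => RtoC (k i) * phibar d k phi i j z)%C = 0%C) /\
  (exists psi1 psi2 : nat -> nat -> R -> C,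
     forall i j z, (i < d)%nat -> (j < d)%nat -> 0 < z ->
       is_derive (V := C_R_NormedModule) (phibar d k phi i j) z (psi1 i j z) /\
       is_derive (V := C_R_NormedModule) (psi1 i j) z (psi2 i j z) /\
       Es d k (phibar d k phi i j) (psi1 i j) (psi2 i j) z = 0%C).
Proof.
intros Hd Hk Hder Hsym Heom.
assert (HK := ksq_neq0 d k Hk).
assert (Hd0 : (0 < d)%nat) by lia.
split; [|split].
- intros z _.
  transitivity (mtrace d (ttproj d k (fun a b => phi a b z))).
  + apply sumC_ext; intro m; now apply phibar_ttproj.
  + now apply mtrace_ttproj.
- intros j z Hj _.
  transitivity (kdot d k (fun i => ttproj d k (fun a b => phi a b z) i j)).
  + apply sumC_ext; intro m; now rewrite phibar_ttproj.
  + now apply kdot_ttproj.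
- exists (phibar d k phi1), (phibar d k phi2); intros i j z Hi Hj Hz.
  split; [|split].
  + apply is_derive_phibar; auto; intros a b Ha Hb; now apply Hder.
  + apply is_derive_phibar; auto; intros a b Ha Hb; now apply Hder.
  + rewrite Es_phibar by assumption.
    set (P := fun a b => phi a b z).
    rewrite (ttproj_ext d k _ (gauge_mode k (fun c =>
      RtoC (k c) * mtrace d P / 2 - kdot d k (fun m => P m c)))%C i j); auto.
    * now apply ttproj_gauge_mode.
    * intros a b Ha Hb; rewrite Heom by assumption.
      apply (eom_source_gauge_mode d k P a b); auto; intros; now apply Hsym.
Qed.
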